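(* Let $S$ be a numerical semigroup with $g=\mathrm{g}(S)\ge1$ and $a=\mathrm{m}(S)$, where $a\in\{2,\dots,g+1\}$ and $a\nmid g$. Let $r\in\{1,\dots,a-1\}$ satisfy $r\equiv g\pmod a$. Then $S$ is reflective if and only if \[ \mathrm{Ap}(S;a)=\{0,\ 2g+a-r\}\cup\big(\{g+1,\dots,g+a-1\}\setminus\{g+a-r\}\big). \]
   Context: A numerical semigroup is a submonoid $S$ of $(\mathbb{N}_0,+)$ with finite complement. Its genus $\mathrm{g}(S)$ is the number of elements of $\mathbb{N}_0\setminus S$, and its multiplicity $\mathrm{m}(S)$ is the smallest positive element of $S$. For $0\ne t\in S$, the Apéry set of $S$ relative to $t$ is $\mathrm{Ap}(S;t)=\{s\in S: s-t\notin S\}$. A numerical semigroup $S$ of genus $g\ge1$ is called reflective if for every $z\in\{0,1,\dots,g-1\}$ exactly one of $z$ and $z+g$ belongs to $S$. *)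

From mathcomp Require Import all_boot.
Set Implicit Arguments. Unset Strict Implicit. Unset Printing Implicit Defensive.

Definition numerical_semigroup (S : pred nat) : Prop :=
  S 0 /\ (forall x y, S x -> S y -> S (x + y)) /\
  (exists N, forall n, N <= n -> S n).

(* g is the genus: the number of elements of N_0 \ S. Here N is any bound
   beyond which everything lies in S, so the count is the size of the gap set. *)
Definition genus_is (S : pred nat) (g : nat) : Prop :=
  exists N, (forall n, N <= n -> S n) /\ count (predC S) (iota 0 N) = g.

Definition multiplicity_is (S : pred nat) (m : nat) : Prop :=
  0 < m /\ S m /\ (forall k, 0 < k < m -> ~~ S k).

(* Apery set Ap(S;t) = { s in S : s - t not in S } (s - t is an integer;
   if s < t it is negative, hence not in S). *)
Definition apery (S : pred nat) (t : nat) (s : nat) : Prop :=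
  S s /\ ~ (t <= s /\ S (s - t)).

Definition reflective (S : pred nat) (g : nat) : Prop :=
  1 <= g /\ genus_is S g /\ (forall z, z < g -> (S z (+) S (z + g)) = true).

From mathcomp Require Import all_boot zify.

Set Implicit Arguments.
Unset Strict Implicit.
Unset Printing Implicit Defensive.

(* Reflectivity determines S.  A gap u < g propagates upwards by steps of a
   below g (u is a gap, so u + g is in S, hence so is u + a + g, so u + a is a
   gap); since the positive integers below a are gaps, S contains exactly the
   multiples of a below g, and by reflectivity exactly the g + z with a not
   dividing z in [g, 2g).  Reflectivity also leaves exactly g gaps below 2g, so
   the genus forces every x >= 2g into S.  The Apery set of this set
   [refl_model g a] is the prescribed one.  Conversely, if Ap(S; a) is the
   prescribed set, every element of S is an Apery element plus a multiple of a
   and [refl_model g a] is closed under adding a, while every element of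
   [refl_model g a] is such a sum; so S = refl_model g a, which is reflective. *)

Lemma dvdn_between a c y : a %| y -> c * a < y < c.+2 * a -> y = c.+1 * a.
Proof.
move=> /dvdnP [m ->] /andP [lo hi].
have a_gt0 : 0 < a by case: a lo hi => //; rewrite !muln0.
rewrite ltn_pmul2r // in lo; rewrite ltn_pmul2r // in hi.
by have -> : m = c.+1 by lia.
Qed.

Lemma ndvdn_mul_add q a r : 0 < r < a -> ~~ (a %| q * a + r).
Proof. by case/andP=> r_gt0 r_lt; rewrite dvdn_addr ?dvdn_mull // gtnNdvd. Qed.

Lemma eq_apery (S S' : pred nat) t x : S =1 S' -> apery S t x <-> apery S' t x.
Proof. by move=> eS; rewrite /apery !eS. Qed.

Lemma apery_decomposition (S : pred nat) a x :
  0 < a -> S x -> exists2 k, k * a <= x & apery S a (x - k * a).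
Proof.
move=> a_gt0; elim: x {-2}x (leqnn x) => [|n IH] x le_xn Sx.
  by exists 0; rewrite ?subn0 //; split=> // -[]; lia.
case: (boolP ((a <= x) && S (x - a))) => [/andP [ax Sxa] | nred].
  have [k le_ka apk] := IH (x - a) ltac:(lia) Sxa.
  exists k.+1; first by rewrite mulSn; lia.
  by rewrite mulSn subnDA.
by exists 0; rewrite ?subn0 //; split=> // -[ax Sxa]; rewrite ax Sxa in nred.
Qed.

Section Submonoid.

Variables (S : pred nat) (a : nat).
Hypotheses (S0 : S 0) (S_add : forall x y, S x -> S y -> S (x + y)) (Sa : S a).

Lemma mem_addn_mul x k : S x -> S (x + k * a).
Proof.
by move=> Sx; elim: k => [|k IH]; rewrite ?addn0 // mulSn addnCA addnC; apply: S_add.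
Qed.

Lemma mem_mul k : S (k * a).
Proof. by rewrite -[k * a]add0n; apply: mem_addn_mul. Qed.

End Submonoid.

Lemma count_gaps_xor (S : pred nat) g :
  (forall z, z < g -> S z (+) S (z + g)) -> count (predC S) (iota 0 (2 * g)) = g.
Proof.
move=> S_xor.
rewrite mul2n -addnn iotaD count_cat add0n -[in iota g g](addn0 g) iotaDl count_map.
rewrite [count (preim _ _) _](@eq_in_count _ _ S); last first.
  move=> z; rewrite mem_iota add0n addn0 => /andP [_ zg] /=.
  by have := S_xor z zg; rewrite addnC; case: (S z); case: (S (g + z)).
by rewrite addn0 addnC count_predC size_iota.
Qed.

Lemma genus_count_gaps_ge (S : pred nat) g n :
  genus_is S g -> count (predC S) (iota 0 n) = g -> forall x, n <= x -> S x.
Proof.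
case=> N [SN gaps] gaps_n x nx; apply/negPn/negP => nSx.
pose M := maxn N x.+1.
have gapsM : count (predC S) (iota 0 M) = g.
  rewrite (_ : M = N + (M - N)); last by rewrite /M; lia.
  rewrite iotaD count_cat gaps add0n (@eq_in_count _ _ pred0) ?count_pred0 ?addn0 //.
  by move=> y; rewrite mem_iota => /andP [Ny _] /=; rewrite SN.
have gap_x : 0 < count (predC S) (iota n (M - n)).
  rewrite -has_count; apply/hasP; exists x => //.
  by rewrite mem_iota nx /M; lia.
move: gapsM; rewrite (_ : M = n + (M - n)); last by rewrite /M; lia.
by rewrite iotaD count_cat gaps_n add0n; lia.
Qed.

Definition refl_model (g a : nat) : pred nat :=
  fun x => if x < g then a %| x else (2 * g <= x) || ~~ (a %| x - g).

Definition apery_candidate (g a r x : nat) : Prop :=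
  x = 0 \/ x = 2 * g + a - r \/ ((g + 1 <= x <= g + a - 1) /\ x <> g + a - r).

Lemma refl_model_lt g a x : x < g -> refl_model g a x = (a %| x).
Proof. by rewrite /refl_model => ->. Qed.

Lemma refl_model_ge g a x : g <= x -> refl_model g a x = (2 * g <= x) || ~~ (a %| x - g).
Proof. by rewrite /refl_model ltnNge => ->. Qed.

Lemma refl_model_xor g a z : z < g -> refl_model g a z (+) refl_model g a (z + g).
Proof.
move=> zg; rewrite refl_model_lt // refl_model_ge ?leq_addl // addnK.
by rewrite mul2n -addnn leq_add2r leqNgt zg; case: (a %| z).
Qed.

Lemma refl_model_addn g a x :
  ~~ (a %| g) -> refl_model g a x -> refl_model g a (x + a).
Proof.
move=> ndg.
have [xg | gx] := ltnP x g.
  rewrite refl_model_lt // => dx.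
  have [xag | gxa] := ltnP (x + a) g; first by rewrite refl_model_lt // dvdn_addl.
  rewrite refl_model_ge // dvdn_subr ?dvdn_addl //.
  by rewrite (negPf ndg) orbT.
rewrite !refl_model_ge ?(leq_trans gx (leq_addr _ _)) //.
case/orP=> [x2 | dx]; first by rewrite (leq_trans x2 (leq_addr _ _)).
by rewrite -addnBAC // dvdn_addl // dx orbT.
Qed.

Lemma refl_model_addn_mul g a x k :
  ~~ (a %| g) -> refl_model g a x -> refl_model g a (x + k * a).
Proof.
move=> ndg Tx; elim: k => [|k IH]; first by rewrite addn0.
by rewrite mulSn addnCA addnC; apply: refl_model_addn.
Qed.

Section Reflective.

Variables (S : pred nat) (g a : nat).
Hypotheses (S0 : S 0) (S_add : forall x y, S x -> S y -> S (x + y)) (Sa : S a).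
Hypotheses (a_gt0 : 0 < a) (S_gap : forall k, 0 < k < a -> ~~ S k).
Hypothesis S_xor : forall z, z < g -> S z (+) S (z + g).

Lemma reflective_gap_addn u : u + a < g -> ~~ S u -> ~~ S (u + a).
Proof.
move=> lt_uag nSu.
have Sug : S (u + g) by have := S_xor (leq_ltn_trans (leq_addr a u) lt_uag); rewrite (negbTE nSu).
have Suag : S (u + a + g) by rewrite addnAC; apply: S_add.
by have := S_xor lt_uag; rewrite Suag; case: (S _).
Qed.

Lemma reflective_gap_addn_mul u k : u + k * a < g -> ~~ S u -> ~~ S (u + k * a).
Proof.
move=> lt_g nSu; elim: k lt_g => [|k IH]; rewrite ?addn0 // mulSn addnCA addnC => lt_g.
by apply: reflective_gap_addn => //; exact: IH (leq_ltn_trans (leq_addr a _) lt_g).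
Qed.

Lemma reflective_mem_lt z : z < g -> S z = (a %| z).
Proof.
move=> zg; apply/idP/idP => [Sz | /dvdnP [k ->]]; last exact: mem_mul.
apply/negPn/negP => nd.
have m_gt0 : 0 < z %% a by rewrite lt0n.
have nSm : ~~ S (z %% a) by apply: S_gap; rewrite m_gt0 ltn_mod.
by have := @reflective_gap_addn_mul _ (z %/ a) _ nSm; rewrite addnC -divn_eq Sz => /(_ zg).
Qed.

Lemma reflective_mem_addg z : z < g -> S (z + g) = ~~ (a %| z).
Proof.
by move=> zg; have := S_xor zg; rewrite reflective_mem_lt //; case: (a %| z); case: (S _).
Qed.

Lemma reflective_eq_refl_model : (forall x, 2 * g <= x -> S x) -> S =1 refl_model g a.
Proof.
move=> S_ge x; have [xg | gx] := ltnP x g; first by rewrite refl_model_lt ?reflective_mem_lt.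
rewrite refl_model_ge //; have [x2 | x2] := leqP (2 * g) x; first exact: S_ge.
by rewrite -{1}(subnK gx) reflective_mem_addg //; lia.
Qed.

End Reflective.

Section Model.

Variables g a q r : nat.
Hypotheses (a_le : a <= g.+1) (r_gt0 : 0 < r) (r_lt : r < a) (g_eq : g = q * a + r).

Local Notation T := (refl_model g a).

Let a_gt0 : 0 < a. Proof. exact: leq_ltn_trans r_lt. Qed.

Lemma apery_refl_model_lt x : x < g -> apery T a x <-> apery_candidate g a r x.
Proof.
move=> xg; rewrite /apery /apery_candidate refl_model_lt //; split.
  case=> dx nx; left; apply/eqP; rewrite -leqn0 leqNgt; apply/negP => x_gt0.
  have ax := dvdn_leq x_gt0 dx.
  by apply: nx; split; rewrite // refl_model_lt ?dvdn_sub //; lia.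
case=> [-> | [e | [e _]]]; [ | lia | lia].
by split; [exact: dvdn0 | case; lia].
Qed.

Lemma apery_refl_model_mid x :
  g <= x < g + a -> apery T a x <-> apery_candidate g a r x.
Proof.
case/andP=> gx xga; rewrite /apery /apery_candidate.
have [-> | gx'] := eqVneq x g.
  rewrite refl_model_ge // subnn dvdn0 orbF leqNgt (_ : g < 2 * g) //; last lia.
  by split=> [[] | ] //; lia.
have gx1 : g < x by rewrite ltn_neqAle eq_sym gx' gx.
rewrite refl_model_ge // (gtnNdvd _ (_ : x - g < a)) ?orbT; try lia.
split.
  case=> _ nx; right; right; split; first by lia.
  move=> e; apply: nx; split; first by lia.
  by rewrite refl_model_lt; [rewrite e (_ : _ - a = q * a); [exact: dvdn_mull | lia] | lia].
case=> [e | [e | [_ ne]]]; [lia | lia | split=> //].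
case=> ax; rewrite refl_model_lt; last by lia.
rewrite dvdn_subl // => dx.
by apply: ne; rewrite (@dvdn_between a q x dx) ?mulSn; lia.
Qed.

Lemma apery_refl_model_ge x : g + a <= x -> apery T a x <-> apery_candidate g a r x.
Proof.
move=> gax; rewrite /apery /apery_candidate !refl_model_ge; try lia.
have -> : (a %| x - a - g) = (a %| x - g) by rewrite subnAC dvdn_subl //; lia.
split.
  case=> Tx nx.
  have x_lt : x < 2 * g + a.
    rewrite ltnNge; apply/negP => x2; apply: nx; split; [lia | apply/orP; left; lia].
  have d : a %| x - g.
    by apply/negPn/negP => nd; apply: nx; split; [lia | rewrite nd orbT].
  right; left; have := @dvdn_between a q (x - g) d; rewrite !mulSn; lia.
case=> [e | [e | [e _]]]; [lia | | lia].
have -> : x - g = q.+1 * a by rewrite mulSn; lia.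
rewrite dvdn_mull // orbF; split; [lia | case=> _; lia].
Qed.

Lemma apery_refl_model x : apery T a x <-> apery_candidate g a r x.
Proof.
have [xg | gx] := ltnP x g; first exact: apery_refl_model_lt.
have [xga | gax] := ltnP x (g + a); last exact: apery_refl_model_ge.
by apply: apery_refl_model_mid; rewrite gx xga.
Qed.

Section Candidate.

Variable S : pred nat.
Hypotheses (S0 : S 0) (S_add : forall x y, S x -> S y -> S (x + y)) (Sa : S a).
Hypothesis S_apery : forall x, apery S a x <-> apery_candidate g a r x.

Lemma mem_of_candidate w : apery_candidate g a r w -> S w.
Proof. by case/S_apery. Qed.

Lemma refl_model_of_mem x : S x -> T x.
Proof.
move=> Sx.
have [k le_ka /S_apery /apery_refl_model [Tw _]] := apery_decomposition a_gt0 Sx.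
by rewrite -(subnK le_ka); apply: refl_model_addn_mul Tw; rewrite g_eq ndvdn_mul_add ?r_gt0.
Qed.

Lemma mem_of_refl_model x : T x -> S x.
Proof.
move=> Tx; case: (boolP (a %| x)) => [/dvdnP [k ->] | nd]; first exact: mem_mul.
have gx : g <= x by rewrite leqNgt; apply: contra nd => xg; rewrite -(@refl_model_lt g a x xg).
have i_lt : (x - g) %% a < a by rewrite ltn_mod.
have x_eq : x = g + (x - g) %% a + (x - g) %/ a * a by rewrite addnAC -addnA -divn_eq subnKC.
move: ((x - g) %/ a) ((x - g) %% a) x_eq i_lt => k i x_eq i_lt.
have [i0 | i_gt0] := posnP i.
  have x2 : 2 * g <= x.
    move: Tx; rewrite refl_model_ge // x_eq i0 addn0 addKn dvdn_mull // orbF; lia.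
  have k_gt : q < k by rewrite -(ltn_pmul2r a_gt0); lia.
  have -> : x = 2 * g + a - r + (k - q.+1) * a.
    by rewrite mulnBl mulSn; have := leq_mul k_gt (leqnn a); rewrite mulSn; lia.
  by apply: mem_addn_mul => //; apply: mem_of_candidate; right; left.
rewrite x_eq; apply: mem_addn_mul => //; apply: mem_of_candidate; right; right.
split; first lia.
move=> e; apply: (negP nd); rewrite x_eq e (_ : g + a - r = q.+1 * a); last by rewrite mulSn; lia.
by rewrite dvdn_add ?dvdn_mull.
Qed.

Lemma candidate_eq_refl_model : S =1 T.
Proof. by move=> x; apply/idP/idP => [/refl_model_of_mem | /mem_of_refl_model]. Qed.

End Candidate.

End Model.

Theorem mainTheorem6 (S : pred nat) (g a r : nat) :
  numerical_semigroup S -> genus_is S g -> 1 <= g ->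
  multiplicity_is S a -> 2 <= a <= g + 1 -> ~~ (a %| g) ->
  1 <= r <= a - 1 -> r = g %[mod a] ->
  (reflective S g <->
   (forall x, apery S a x <->
      (x = 0 \/ x = 2 * g + a - r \/
       ((g + 1 <= x <= g + a - 1) /\ x <> g + a - r)))).
Proof.
(* [a %| g] is excluded already by [r = g %[mod a]] and [0 < r < a]. *)
move=> [S0 [S_add _]] genS g_gt0 [_ [Sa S_gap]] /andP [_ a_le] _ /andP [r_gt0 r_le] r_mod.
have r_lt : r < a by lia.
have a_gt0 : 0 < a by lia.
have g_eq : g = g %/ a * a + r by rewrite {1}(divn_eq g a) -r_mod modn_small.
rewrite addn1 in a_le.
split.
- case=> _ [_ S_xor] x.
  have S_ge := genus_count_gaps_ge genS (count_gaps_xor S_xor).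
  have S_model := reflective_eq_refl_model S0 S_add Sa a_gt0 S_gap S_xor S_ge.
  by rewrite (eq_apery _ _ S_model); apply: apery_refl_model a_le r_gt0 r_lt g_eq x.
- move=> S_apery; split=> //; split=> // z zg.
  rewrite !(candidate_eq_refl_model a_le r_gt0 r_lt g_eq S0 S_add Sa S_apery).
  exact: refl_model_xor.
Qed.
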